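(* (i) If $H_1$ and $H_2$ are $\operatorname{IR}$-graphs, then their Cartesian product $H_1 \,\square\, H_2$ is an $\operatorname{IR}$-graph. (ii) For every $n\geq 1$, the hypercube $Q_n$ is an $\operatorname{IR}$-graph; in particular $C_4\cong Q_2$ is an $\operatorname{IR}$-graph.
   Context: All graphs are finite and simple. For a graph $G=(V,E)$, $D\subseteq V$ and $v\in D$, the private neighbourhood of $v$ with respect to $D$ is $\operatorname{PN}(v,D)=N[v]-N[D-\{v\}]$, where $N[\cdot]$ denotes closed neighbourhood. A set $D$ is irredundant if $\operatorname{PN}(v,D)\neq\varnothing$ for every $v\in D$. The upper irredundance number $\operatorname{IR}(G)$ is the largest cardinality of an irredundant set of $G$, and an $\operatorname{IR}(G)$-set is an irredundant set of cardinality $\operatorname{IR}(G)$. The $\operatorname{IR}$-graph $G(\operatorname{IR})$ of $G$ has the $\operatorname{IR}(G)$-sets as vertices, two such sets $D,D'$ being adjacent iff there are $u\in D$, $v\in D'$ with $uv\in E(G)$ and $D'=(D-\{u\})\cup\{v\}$. A graph $H$ is an $\operatorname{IR}$-graph if $H\cong G(\operatorname{IR})$ for some graph $G$. *)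

(* finite simple graphs as symmetric irreflexive relations on finTypes. *)
From mathcomp Require Import all_boot.
Set Implicit Arguments. Unset Strict Implicit. Unset Printing Implicit Defensive.

Section IR.
Variables (V : finType) (g : rel V).

Definition cnbhd (v : V) : {set V} := [set u | (u == v) || g v u].

Definition PN (D : {set V}) (v : V) : {set V} :=
  cnbhd v :\: \bigcup_(w in D :\ v) cnbhd w.

Definition irredundant (D : {set V}) : bool :=
  [forall v in D, PN D v != set0].

Definition IR : nat := \max_(D : {set V} | irredundant D) #|D|.

Definition IRset (D : {set V}) : bool := irredundant D && (#|D| == IR).

Definition IRadj (D D' : {set V}) : bool :=
  [exists u in D, exists v in D', g u v && (D' == (D :\ u) :|: [set v])].

Definition IRgraph_vert : finType := {D : {set V} | IRset D}.
Definition IRgraph_rel : rel IRgraph_vert := fun D D' => IRadj (val D) (val D').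
End IR.

Definition isomorphic (T1 T2 : finType) (e1 : rel T1) (e2 : rel T2) : Prop :=
  exists f : T1 -> T2, bijective f /\ forall x y, e1 x y = e2 (f x) (f y).

Definition is_IR_graph (T : finType) (h : rel T) : Prop :=
  exists (V : finType) (g : rel V),
    symmetric g /\ irreflexive g /\ isomorphic h (@IRgraph_rel V g).

Definition cartprod (T1 T2 : finType) (h1 : rel T1) (h2 : rel T2) : rel (T1 * T2)%type :=
  fun x y => ((x.1 == y.1) && h2 x.2 y.2) || ((x.2 == y.2) && h1 x.1 y.1).

Definition hypercube (n : nat) : rel {ffun 'I_n -> bool} :=
  fun x y => #|[set i | x i != y i]| == 1.

Definition cycle_graph (n : nat) : rel 'I_n :=
  fun i j => (val j == (val i).+1 %% n) || (val i == (val j).+1 %% n).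

Arguments hypercube n : clear implicits.
Arguments cycle_graph n : clear implicits.

(** The IR-graph of a disjoint union G1 + G2 is the Cartesian product of the
    IR-graphs of G1 and G2. Private neighbours of a vertex stay on its own
    side, so D is irredundant in G1 + G2 iff both of its parts are; hence
    IR(G1 + G2) = IR(G1) + IR(G2), the IR-sets of G1 + G2 are exactly the
    unions of an IR(G1)-set and an IR(G2)-set, and a swap inside such a union
    moves one part along an edge and fixes the other, i.e. follows an edge of
    the product. K2 is its own IR-graph, so C4 = K2 □ K2 and
    Q(n+1) = Qn □ K2 are IR-graphs, starting from the one-vertex graph Q0,
    which is the IR-graph of the empty graph. *)

From mathcomp Require Import all_boot zify.
Set Implicit Arguments. Unset Strict Implicit. Unset Printing Implicit Defensive.

Section Irredundance.
Variables (V : finType) (g : rel V).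

Lemma PNP (D : {set V}) v x :
  reflect (((x == v) || g v x) /\
           (forall w, w \in D -> w != v -> ~~ ((x == w) || g w x)))
          (x \in PN g D v).
Proof.
rewrite /PN inE [x \in cnbhd g v]inE.
apply: (iffP andP) => [[Nx Px]|[Px Nx]]; split => //.
- move=> w wD wv; apply: contra Nx => Pw.
  by apply/bigcupP; exists w; rewrite ?inE ?wv.
- by apply/bigcupP => -[w]; rewrite !inE => /andP[wv wD]; apply/negP; apply: Nx.
Qed.

Lemma irredundantP (D : {set V}) :
  reflect (forall v, v \in D -> exists x, x \in PN g D v) (irredundant g D).
Proof.
apply: (iffP forall_inP) => irrD v /irrD; first by case/set0Pn=> x; exists x.
by case=> x PNx; apply/set0Pn; exists x.
Qed.

Lemma irredundant0 : irredundant g set0.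
Proof. by apply/irredundantP => v; rewrite inE. Qed.

Lemma leq_card_IR (D : {set V}) : irredundant g D -> #|D| <= IR g.
Proof. by move=> irrD; rewrite /IR (leq_bigmax_cond _ irrD). Qed.

Lemma IR_attained : exists2 D, irredundant g D & #|D| = IR g.
Proof.
have [|D irrD E] := @eq_bigmax_cond _ (fun D => irredundant g D) (fun D => #|D|).
  by apply/card_gt0P; exists set0; apply: irredundant0.
by exists D => //; rewrite /IR E.
Qed.

Lemma IRadjP (D D' : {set V}) :
  reflect (exists u v, [/\ u \in D, v \in D', g u v & D' = D :\ u :|: [set v]])
          (IRadj g D D').
Proof.
apply: (iffP exists_inP) => [[u uD /exists_inP[v vD' /andP[uv /eqP eqD']]]|].
  by exists u, v.
case=> u [v [uD vD' uv eqD']]; exists u => //; apply/exists_inP; exists v => //.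
by rewrite uv eqD' eqxx.
Qed.

End Irredundance.

Section DisjointUnion.
Variables (V1 V2 : finType) (g1 : rel V1) (g2 : rel V2).

Definition sum_graph : rel (V1 + V2) := fun x y =>
  match x, y with
  | inl a, inl b => g1 a b
  | inr a, inr b => g2 a b
  | _, _ => false
  end.

Definition lpart (D : {set V1 + V2}) : {set V1} := inl @^-1: D.
Definition rpart (D : {set V1 + V2}) : {set V2} := inr @^-1: D.
Definition sum_set (D1 : {set V1}) (D2 : {set V2}) : {set V1 + V2} :=
  [set x | match x with inl a => a \in D1 | inr b => b \in D2 end].

Lemma lpart_sum_set D1 D2 : lpart (sum_set D1 D2) = D1.
Proof. by apply/setP => a; rewrite !inE. Qed.

Lemma rpart_sum_set D1 D2 : rpart (sum_set D1 D2) = D2.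
Proof. by apply/setP => b; rewrite !inE. Qed.

Lemma sum_set_parts (D : {set V1 + V2}) : sum_set (lpart D) (rpart D) = D.
Proof. by apply/setP => -[a|b]; rewrite !inE. Qed.

Lemma sum_set_eq (D D' : {set V1 + V2}) :
  lpart D = lpart D' -> rpart D = rpart D' -> D = D'.
Proof. by move=> eqL eqR; rewrite -[D]sum_set_parts -[D']sum_set_parts eqL eqR. Qed.

Lemma card_parts (D : {set V1 + V2}) : #|D| = #|lpart D| + #|rpart D|.
Proof.
by rewrite -!sum1_card big_sumType; congr (_ + _); apply: eq_bigl => x; rewrite !inE.
Qed.

Lemma lpart_swapl (D : {set V1 + V2}) a b :
  lpart (D :\ inl a :|: [set inl b]) = lpart D :\ a :|: [set b].
Proof. by apply/setP => c; rewrite !inE !(inj_eq inl_inj). Qed.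

Lemma rpart_swapl (D : {set V1 + V2}) a b :
  rpart (D :\ inl a :|: [set inl b]) = rpart D.
Proof. by apply/setP => c; rewrite !inE orbF. Qed.

Lemma lpart_swapr (D : {set V1 + V2}) a b :
  lpart (D :\ inr a :|: [set inr b]) = lpart D.
Proof. by apply/setP => c; rewrite !inE orbF. Qed.

Lemma rpart_swapr (D : {set V1 + V2}) a b :
  rpart (D :\ inr a :|: [set inr b]) = rpart D :\ a :|: [set b].
Proof. by apply/setP => c; rewrite !inE !(inj_eq inr_inj). Qed.

Lemma PN_inl (D : {set V1 + V2}) a x :
  (x \in PN sum_graph D (inl a)) =
  if x is inl b then b \in PN g1 (lpart D) a else false.
Proof.
case: x => [b|b]; last by apply/PNP => -[].
apply/PNP/PNP => -[Nb Pb]; split; rewrite ?(inj_eq inl_inj) // in Nb *.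
  by move=> c; rewrite inE => cD ca; have := Pb _ cD; rewrite !(inj_eq inl_inj); apply.
by case=> c // cD; rewrite !(inj_eq inl_inj); apply: Pb; rewrite inE.
Qed.

Lemma PN_inr (D : {set V1 + V2}) a x :
  (x \in PN sum_graph D (inr a)) =
  if x is inr b then b \in PN g2 (rpart D) a else false.
Proof.
case: x => [b|b]; first by apply/PNP => -[].
apply/PNP/PNP => -[Nb Pb]; split; rewrite ?(inj_eq inr_inj) // in Nb *.
  by move=> c; rewrite inE => cD ca; have := Pb _ cD; rewrite !(inj_eq inr_inj); apply.
by case=> c // cD; rewrite !(inj_eq inr_inj); apply: Pb; rewrite inE.
Qed.

Lemma irredundant_sum (D : {set V1 + V2}) :
  irredundant sum_graph D = irredundant g1 (lpart D) && irredundant g2 (rpart D).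
Proof.
apply/irredundantP/andP => [irrD|[/irredundantP irr1 /irredundantP irr2]].
  split; apply/irredundantP => a; rewrite inE => /irrD[[b|b]];
    rewrite ?PN_inl ?PN_inr // => PNb; by exists b.
case=> a aD.
  by have [|b PNb] := irr1 a; [rewrite inE | exists (inl b); rewrite PN_inl].
by have [|b PNb] := irr2 a; [rewrite inE | exists (inr b); rewrite PN_inr].
Qed.

Lemma IR_sum : IR sum_graph = IR g1 + IR g2.
Proof.
apply/eqP; rewrite eqn_leq; apply/andP; split.
  apply/bigmax_leqP => D; rewrite irredundant_sum card_parts => /andP[irr1 irr2].
  by rewrite leq_add ?leq_card_IR.
have [D1 irr1 <-] := IR_attained g1; have [D2 irr2 <-] := IR_attained g2.
have -> : #|D1| + #|D2| = #|sum_set D1 D2|.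
  by rewrite card_parts lpart_sum_set rpart_sum_set.
by rewrite leq_card_IR // irredundant_sum lpart_sum_set rpart_sum_set irr1.
Qed.

Lemma IRset_sum (D : {set V1 + V2}) :
  IRset sum_graph D = IRset g1 (lpart D) && IRset g2 (rpart D).
Proof.
rewrite /IRset irredundant_sum IR_sum card_parts.
have [irr1|] //= := boolP (irredundant g1 _).
have [irr2|] /= := boolP (irredundant g2 _); last by rewrite andbF.
have le1 := leq_card_IR irr1; have le2 := leq_card_IR irr2.
by apply/eqP/andP => [eqIR|[/eqP-> /eqP->]] //; split; apply/eqP; lia.
Qed.

Lemma IRadj_sum (D D' : {set V1 + V2}) : IRadj sum_graph D D' =
  ((lpart D == lpart D') && IRadj g2 (rpart D) (rpart D')) ||
  ((rpart D == rpart D') && IRadj g1 (lpart D) (lpart D')).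
Proof.
apply/IRadjP/orP => [[[a|a] [[b|b]]] [aD _ ab ->] //|].
- right; rewrite lpart_swapl rpart_swapl eqxx; apply/IRadjP.
  by exists a, b; split; rewrite ?inE ?eqxx ?orbT.
- left; rewrite lpart_swapr rpart_swapr eqxx; apply/IRadjP.
  by exists a, b; split; rewrite ?inE ?eqxx ?orbT.
- case=> /andP[/eqP eqD /IRadjP[a [b [aD bD' ab eqD']]]]; rewrite !inE in aD bD'.
    exists (inr a), (inr b); split => //.
    by apply: sum_set_eq; rewrite ?lpart_swapr ?rpart_swapr.
  exists (inl a), (inl b); split => //.
  by apply: sum_set_eq; rewrite ?lpart_swapl ?rpart_swapl.
Qed.

Lemma IRset_sum_set D1 D2 :
  IRset g1 D1 -> IRset g2 D2 -> IRset sum_graph (sum_set D1 D2).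
Proof. by move=> IR1 IR2; rewrite IRset_sum lpart_sum_set rpart_sum_set IR1. Qed.

Lemma IRset_lpart (D : {set V1 + V2}) : IRset sum_graph D -> IRset g1 (lpart D).
Proof. by rewrite IRset_sum => /andP[]. Qed.

Lemma IRset_rpart (D : {set V1 + V2}) : IRset sum_graph D -> IRset g2 (rpart D).
Proof. by rewrite IRset_sum => /andP[]. Qed.

Lemma IRgraph_sum :
  isomorphic (cartprod (@IRgraph_rel _ g1) (@IRgraph_rel _ g2)) (@IRgraph_rel _ sum_graph).
Proof.
pose join (D : IRgraph_vert g1 * IRgraph_vert g2) : IRgraph_vert sum_graph :=
  Sub (sum_set (val D.1) (val D.2)) (IRset_sum_set (valP D.1) (valP D.2)).
pose parts (D : IRgraph_vert sum_graph) : IRgraph_vert g1 * IRgraph_vert g2 :=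
  (Sub (lpart (val D)) (IRset_lpart (valP D)), Sub (rpart (val D)) (IRset_rpart (valP D))).
exists join; split.
  exists parts => [[D1 D2]|D]; last by apply: val_inj; rewrite /= sum_set_parts.
  by congr pair; apply: val_inj; rewrite /= ?lpart_sum_set ?rpart_sum_set.
move=> [D1 D2] [E1 E2]; rewrite /IRgraph_rel /cartprod /= IRadj_sum.
by rewrite !lpart_sum_set !rpart_sum_set -!val_eqE.
Qed.

End DisjointUnion.

Lemma isomorphic_trans (T1 T2 T3 : finType) (e1 : rel T1) (e2 : rel T2) (e3 : rel T3) :
  isomorphic e1 e2 -> isomorphic e2 e3 -> isomorphic e1 e3.
Proof.
move=> [f [bij_f ef]] [f' [bij_f' ef']]; exists (f' \o f); split.
  exact: bij_comp.
by move=> x y; rewrite ef ef'.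
Qed.

Lemma isomorphic_cartprod (T1 T2 T1' T2' : finType)
    (h1 : rel T1) (h2 : rel T2) (h1' : rel T1') (h2' : rel T2') :
  isomorphic h1 h1' -> isomorphic h2 h2' -> isomorphic (cartprod h1 h2) (cartprod h1' h2').
Proof.
move=> [f1 [bij_f1 ef1]] [f2 [bij_f2 ef2]].
exists (fun x => (f1 x.1, f2 x.2)); split.
  case: bij_f1 => f1' f1K f1K'; case: bij_f2 => f2' f2K f2K'.
  exists (fun y => (f1' y.1, f2' y.2)) => [[x1 x2]|[y1 y2]].
    by rewrite /= f1K f2K.
  by rewrite /= f1K' f2K'.
by move=> x y; rewrite /cartprod /= ef1 ef2 (bij_eq bij_f1) (bij_eq bij_f2).
Qed.

Lemma is_IR_graph_iso (T T' : finType) (h : rel T) (h' : rel T') :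
  isomorphic h h' -> is_IR_graph h' -> is_IR_graph h.
Proof.
move=> iso_h [V [g [sym_g [irr_g iso_h']]]].
by exists V, g; do 2 split => //; apply: isomorphic_trans iso_h iso_h'.
Qed.

Lemma is_IR_graph_cartprod (T1 T2 : finType) (h1 : rel T1) (h2 : rel T2) :
  is_IR_graph h1 -> is_IR_graph h2 -> is_IR_graph (cartprod h1 h2).
Proof.
move=> [V1 [g1 [sym1 [irr1 iso1]]]] [V2 [g2 [sym2 [irr2 iso2]]]].
exists (V1 + V2)%type, (sum_graph g1 g2); split; [|split].
- by move=> [a|a] [b|b] //=; apply: sym1 || apply: sym2.
- by move=> [a|a] /=; [apply: irr1 | apply: irr2].
- exact: isomorphic_trans (isomorphic_cartprod iso1 iso2) (IRgraph_sum _ _).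
Qed.

Lemma is_IR_graph_single (T : finType) (h : rel T) (t : T) :
  all_equal_to t -> irreflexive h -> is_IR_graph h.
Proof.
move=> eq_t irr_h; pose g (_ _ : void) := false.
exists void, g; do 2 split => //.
have eq_set0 (D : {set void}) : D = set0 by apply/setP => -[].
have IR_set0 : IRset g set0.
  rewrite /IRset irredundant0 cards0 eq_sym -leqn0.
  by apply/bigmax_leqP => D _; rewrite (eq_set0 D) cards0.
exists (fun _ => Sub set0 IR_set0); split.
  exists (fun _ => t) => [x|D]; first by rewrite eq_t.
  by apply: val_inj; rewrite /= (eq_set0 (val D)).
move=> x y; rewrite (eq_t x) (eq_t y) irr_h; apply/esym/negbTE.
by apply/exists_inP => -[].
Qed.

Definition K2 : rel bool := fun a b => a != b.

Lemma IRset_K2 (D : {set bool}) : IRset K2 D = (#|D| == 1).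
Proof.
have irr_set1 b : irredundant K2 [set b].
  apply/irredundantP => v; rewrite inE => /eqP ->; exists b; apply/PNP.
  by split=> [|w]; rewrite ?inE ?eqxx // => /eqP ->; rewrite eqxx.
have IR_K2 : IR K2 = 1.
  apply/eqP; rewrite eqn_leq -{2}(cards1 true) leq_card_IR // andbT.
  apply/bigmax_leqP => {}D /irredundantP irrD; rewrite leqNgt; apply/negP => D2.
  have DT : D = setT by apply/eqP; rewrite eqEcard subsetT cardsT card_bool.
  have [|x /PNP[_ PNx]] := irrD true; first by rewrite DT inE.
  by have := PNx false; rewrite DT inE => /(_ isT isT); case: (x).
rewrite /IRset IR_K2; apply/andP/idP => [[] //|D1]; split=> //.
by case/cards1P: D1 => b ->.
Qed.

Lemma IRgraph_K2 : isomorphic K2 (@IRgraph_rel _ K2).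
Proof.
have IRset1 b : IRset K2 [set b] by rewrite IRset_K2 cards1.
exists (fun b => Sub [set b] (IRset1 b)); split.
  exists (fun D : IRgraph_vert K2 => true \in val D) => [b|D].
    by rewrite /= inE; case: b.
  apply: val_inj; have /cards1P[b ->] : #|val D| == 1 by rewrite -IRset_K2 (valP D).
  by rewrite /= inE; case: b.
move=> a b; rewrite /IRgraph_rel /=.
apply/idP/IRadjP => [ab|[u [v [/set1P-> /set1P-> //]]]].
by exists a, b; rewrite setDv set0U !set11.
Qed.

Lemma is_IR_graph_K2 : is_IR_graph K2.
Proof. by exists bool, K2; split=> [[] []|]; split=> [[]|]; last exact: IRgraph_K2. Qed.

Definition hamming (I : finType) (T : eqType) (x y : {ffun I -> T}) : nat :=
  #|[set i | x i != y i]|.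

Lemma hamming_eq0 (I : finType) (T : eqType) (x y : {ffun I -> T}) :
  (hamming x y == 0) = (x == y).
Proof.
rewrite cards_eq0; apply/eqP/eqP => [/setP diff0|->].
  by apply/ffunP => i; apply/eqP; move: (diff0 i); rewrite !inE => /negbFE.
by apply/setP => i; rewrite !inE eqxx.
Qed.

Definition fbehead n (T : Type) (x : {ffun 'I_n.+1 -> T}) : {ffun 'I_n -> T} :=
  [ffun i => x (lift ord0 i)].

Lemma hamming_fbehead n (T : eqType) (x y : {ffun 'I_n.+1 -> T}) :
  hamming x y = (x ord0 != y ord0) + hamming (fbehead x) (fbehead y).
Proof.
rewrite /hamming -!sum1dep_card big_mkcond big_ord_recl /=; congr (_ + _).
by rewrite [RHS]big_mkcond; apply: eq_bigr => i _; rewrite !ffunE.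
Qed.

Lemma hypercube_succ n : isomorphic (hypercube n.+1) (cartprod (hypercube n) K2).
Proof.
exists (fun x => (fbehead x, x ord0)); split.
  exists (fun p : {ffun 'I_n -> bool} * bool =>
    [ffun i : 'I_n.+1 => if unlift ord0 i is Some j then p.1 j else p.2]).
    move=> x; apply/ffunP => i; rewrite ffunE.
    by case: unliftP => [j|] ->; rewrite ?ffunE.
  by move=> [x b]; congr pair; [apply/ffunP => i|]; rewrite !ffunE ?liftK ?unlift_none.
move=> x y; rewrite /hypercube /cartprod /K2 /=.
rewrite -/(hamming x y) -/(hamming (fbehead x) (fbehead y)) hamming_fbehead -hamming_eq0.
by case: (x ord0 == y ord0); case: hamming => [|[]].
Qed.

Lemma is_IR_graph_hypercube0 : is_IR_graph (hypercube 0).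
Proof.
apply: (@is_IR_graph_single _ _ [ffun i => false]) => [x|x].
  by apply/ffunP => -[].
by rewrite /hypercube -/(hamming x x); have /eqP-> : hamming x x == 0 by rewrite hamming_eq0.
Qed.

Lemma C4_K2K2 : isomorphic (cycle_graph 4) (cartprod K2 K2).
Proof.
pose f (i : 'I_4) := (1 < i, (i == 1 :> nat) || (i == 2 :> nat)).
pose f' (p : bool * bool) : 'I_4 :=
  inord (match p with
         | (false, false) => 0 | (false, true) => 1
         | (true, true) => 2 | (true, false) => 3
         end).
exists f; split.
  exists f' => [[[|[|[|[|i]]]] ?] //|[[] []]];
    by [apply: val_inj; rewrite /= inordK | rewrite /f /f' inordK].
by move=> [[|[|[|[|i]]]] ?] // [[|[|[|[|j]]]] ?].
Qed.

Theorem proposition2p1 :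
  (forall (T1 T2 : finType) (h1 : rel T1) (h2 : rel T2),
      is_IR_graph h1 -> is_IR_graph h2 -> is_IR_graph (cartprod h1 h2)) /\
  (forall n : nat, 1 <= n -> is_IR_graph (hypercube n)) /\
  is_IR_graph (cycle_graph 4).
Proof.
split; first exact: is_IR_graph_cartprod.
split.
- move=> n _; elim: n => [|n IHn]; first exact: is_IR_graph_hypercube0.
  exact: is_IR_graph_iso (hypercube_succ n) (is_IR_graph_cartprod IHn is_IR_graph_K2).
- exact: is_IR_graph_iso C4_K2K2 (is_IR_graph_cartprod is_IR_graph_K2 is_IR_graph_K2).
Qed.
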